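(* Let $\psi\colon\mathbb R^2\to\mathbb R$ be smooth and $p_\ast\in\mathbb R^2$ be such that conditions 1–7 below hold with $N=2$. Let $\alpha,c>0$, $\varpi\in\mathbb N$, $U(\tau):=\alpha\sin(\varpi\tau)$, $v(\tau):=c\sin(\varpi\tau)$, and for $a\in\mathbb R$ define $\phi^a\colon\mathbb R^2\times\mathbb S^1\to\mathbb R$ by $\phi^a([p,o]):=\frac1{2\pi}\int_0^{2\pi}\int_0^1(1-s)\,U(\tau)^2v(\tau)\,\langle\nabla^2\psi(p+asU(\tau)o)o,o\rangle\,\mathrm ds\,\mathrm d\tau$. Then there exist $a_0',\kappa>0$ such that $|\phi^a(x)|\le\kappa|\nabla\psi(p)|$ for every $a\in[0,a_0']$ and every $x=[p,o]\in\mathbb R^2\times\mathbb S^1$.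
   Context: $\mathbb S^1$ is the unit circle in $\mathbb R^2$. Notation: $y_\ast:=\psi(p_\ast)$, $\underline y:=\inf\psi\in\mathbb R\cup\{-\infty\}$, $|\nabla^2\psi(p)|$ the operator norm of the Hessian, $\psi^{-1}(\ge y):=\{p:\psi(p)\ge y\}$. Conditions: (1) $\psi(p)<y_\ast$ for $p\ne p_\ast$; (2) $\nabla^2\psi(p_\ast)$ negative definite; (3) there is $r_1>0$ with $\psi(p_\ast+v)=\psi(p_\ast-v)$ for $|v|\le r_1$; (4) there is $c_1>0$ with $|\nabla^2\psi(p)|\le c_1$ for all $p$; (5) $\nabla\psi(p)\ne0$ for $p\ne p_\ast$; (6) for every $y\in(\underline y,y_\ast)$, $\psi^{-1}(\ge y)$ is compact; (7) there are $c_2,r_2,r_3>0$ with $|\nabla^2\psi(p+v)|\le c_2|\nabla\psi(p)|$ for all $|p-p_\ast|\ge r_2$, $|v|\le r_3$. *)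

From Stdlib Require Import Reals Lra List.
From Coquelicot Require Import Coquelicot.
Open Scope R_scope.

Definition vadd (p q : R * R) : R * R := (fst p + fst q, snd p + snd q).
Definition vsub (p q : R * R) : R * R := (fst p - fst q, snd p - snd q).
Definition vopp (p : R * R) : R * R := (- fst p, - snd p).
Definition vscal (k : R) (p : R * R) : R * R := (k * fst p, k * snd p).
Definition dot (p q : R * R) : R := fst p * fst q + snd p * snd q.
Definition vnorm (p : R * R) : R := sqrt (dot p p).

Definition d1 (f : R * R -> R) : R * R -> R :=
  fun p => Derive (fun t => f (t, snd p)) (fst p).
Definition d2 (f : R * R -> R) : R * R -> R :=
  fun p => Derive (fun t => f (fst p, t)) (snd p).
Definition pd (b : bool) := if b then d1 else d2.
Fixpoint Dl (l : list bool) (f : R * R -> R) : R * R -> R :=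
  match l with nil => f | b :: l' => pd b (Dl l' f) end.

Definition smooth (f : R * R -> R) : Prop :=
  forall l : list bool,
    (forall p : R * R,
        ex_derive (fun t => Dl l f (t, snd p)) (fst p) /\
        ex_derive (fun t => Dl l f (fst p, t)) (snd p)) /\
    (forall p : R * R, continuous (Dl l f) p).

Definition grad (f : R * R -> R) (p : R * R) : R * R := (d1 f p, d2 f p).
Definition hess_apply (f : R * R -> R) (p v : R * R) : R * R :=
  (d1 (d1 f) p * fst v + d1 (d2 f) p * snd v,
   d2 (d1 f) p * fst v + d2 (d2 f) p * snd v).
Definition hess_opnorm (f : R * R -> R) (p : R * R) : Rbar :=
  Lub_Rbar (fun r => exists v, vnorm v = 1 /\ r = vnorm (hess_apply f p v)).

Definition compact2 (K : R * R -> Prop) : Prop :=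
  forall (I : Type) (U : I -> (R * R -> Prop)),
    (forall i, open (U i)) ->
    (forall x, K x -> exists i, U i x) ->
    exists l : list I, forall x, K x -> exists i, In i l /\ U i x.

Definition inf_val (psi : R * R -> R) : Rbar :=
  Glb_Rbar (fun r => exists p, r = psi p).

(* Conditions (1)-(7) *)
Definition conditions (psi : R * R -> R) (ps : R * R) : Prop :=
  (* (1) *) (forall p, p <> ps -> psi p < psi ps) /\
  (* (2) *) (forall v, v <> (0, 0) -> dot (hess_apply psi ps v) v < 0) /\
  (* (3) *) (exists r1, 0 < r1 /\ forall v, vnorm v <= r1 ->
                 psi (vadd ps v) = psi (vsub ps v)) /\
  (* (4) *) (exists c1, 0 < c1 /\ forall p, Rbar_le (hess_opnorm psi p) c1) /\
  (* (5) *) (forall p, p <> ps -> grad psi p <> (0, 0)) /\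
  (* (6) *) (forall y, Rbar_lt (inf_val psi) y -> y < psi ps ->
                 compact2 (fun p => psi p >= y)) /\
  (* (7) *) (exists c2 r2 r3, 0 < c2 /\ 0 < r2 /\ 0 < r3 /\
               forall p v, vnorm (vsub p ps) >= r2 -> vnorm v <= r3 ->
                 Rbar_le (hess_opnorm psi (vadd p v))
                         (c2 * vnorm (grad psi p))).

Definition phi (psi : R * R -> R) (alpha c : R) (w : nat) (a : R)
    (p o : R * R) : R :=
  let U := fun tau => alpha * sin (INR w * tau) in
  let v := fun tau => c * sin (INR w * tau) in
  / (2 * PI) *
  RInt (fun tau =>
    RInt (fun s =>
      (1 - s) * (U tau) ^ 2 * v tau *
      dot (hess_apply psi (vadd p (vscal (a * s * U tau) o)) o) o) 0 1)
    0 (2 * PI).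

(* Substituting 2 pi - tau for tau changes the sign of sin (w tau), so phi^a = - phi^(-a) and
   phi^a is half the integral of (1 - s) U^2 v against F(p + t o) - F(p - t o), where
   F(q) = <Hess psi(q) o, o> and t = a s U(tau).  It remains to bound this difference by
   kappa |grad psi(p)| for small |t|.  Near p_* the symmetry (3) makes the Hessian even about
   p_*, so the difference is F(p + t o) - F(2 p_* - p + t o) = O(|p - p_*|) because the Hessian
   is locally Lipschitz, while the nondegenerate critical point (2) gives
   |grad psi(p)| >= mu |p - p_*|.  On a bounded region away from p_* the gradient is bounded
   below by compactness and (5), and the Hessian is bounded by (4); far from p_*, (7) bounds
   each term by c2 |grad psi(p)|. *)

From Pilot Require Import Defs.
From Stdlib Require Import Reals Lra Psatz List Classical IndefiniteDescription.
From Coquelicot Require Import Coquelicot.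
Open Scope R_scope.

Lemma vnorm_ge_0 v : 0 <= vnorm v.
Proof. apply sqrt_pos. Qed.

Lemma vnorm_pos v : v <> (0, 0) -> 0 < vnorm v.
Proof.
  intros Hv. apply sqrt_lt_R0. destruct v as [x y]. unfold dot; simpl.
  destruct (Req_dec x 0) as [->|Hx]; [destruct (Req_dec y 0) as [->|Hy]; [congruence|nra]|nra].
Qed.

Lemma vnorm_sqr v : vnorm v * vnorm v = fst v * fst v + snd v * snd v.
Proof. unfold vnorm, dot. apply sqrt_sqrt. nra. Qed.

Lemma Rabs_fst_le_vnorm v : Rabs (fst v) <= vnorm v.
Proof.
  unfold vnorm, dot. rewrite <- sqrt_Rsqr_abs. apply sqrt_le_1_alt.
  unfold Rsqr. nra.
Qed.

Lemma Rabs_snd_le_vnorm v : Rabs (snd v) <= vnorm v.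
Proof.
  unfold vnorm, dot. rewrite <- sqrt_Rsqr_abs. apply sqrt_le_1_alt.
  unfold Rsqr. nra.
Qed.

Lemma vnorm_le_Rabs_sum v : vnorm v <= Rabs (fst v) + Rabs (snd v).
Proof.
  pose proof (Rabs_pos (fst v)); pose proof (Rabs_pos (snd v)).
  unfold vnorm, dot.
  rewrite <- (sqrt_Rsqr (Rabs (fst v) + Rabs (snd v))) by lra.
  apply sqrt_le_1_alt. unfold Rsqr.
  rewrite <- (Rabs_pos_eq (fst v * fst v)), <- (Rabs_pos_eq (snd v * snd v)) by nra.
  rewrite !Rabs_mult. nra.
Qed.

Lemma Rabs_dot_le u v : Rabs (dot u v) <= vnorm u * vnorm v.
Proof.
  unfold vnorm. rewrite <- sqrt_mult by (unfold dot; nra).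
  rewrite <- sqrt_Rsqr_abs. apply sqrt_le_1_alt.
  destruct u as [u1 u2], v as [v1 v2]. unfold dot, Rsqr; simpl.
  pose proof (Rle_0_sqr (u1 * v2 - u2 * v1)). unfold Rsqr in *. nra.
Qed.

Lemma vnorm_ge_of_neg_dot_ge g v mu :
  mu * (vnorm v * vnorm v) <= - dot g v -> mu * vnorm v <= vnorm g.
Proof.
  intros H. pose proof (Rabs_dot_le g v). pose proof (Rle_abs (- dot g v)).
  rewrite Rabs_Ropp in *. pose proof (vnorm_ge_0 v); pose proof (vnorm_ge_0 g).
  destruct (Req_dec (vnorm v) 0) as [Hz|Hnz]; [rewrite Hz; lra|].
  apply (Rmult_le_reg_r (vnorm v)); nra.
Qed.

Lemma vnorm_vscal k v : vnorm (vscal k v) = Rabs k * vnorm v.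
Proof.
  unfold vnorm, vscal, dot; simpl.
  replace (k * fst v * (k * fst v) + k * snd v * (k * snd v))
    with ((k * k) * (fst v * fst v + snd v * snd v)) by ring.
  rewrite sqrt_mult_alt by nra. f_equal. apply sqrt_Rsqr_abs.
Qed.

Lemma Rabs_coord_le_1 o : vnorm o = 1 -> Rabs (fst o) <= 1 /\ Rabs (snd o) <= 1.
Proof. intros Ho. rewrite <- Ho. split; [apply Rabs_fst_le_vnorm | apply Rabs_snd_le_vnorm]. Qed.

Definition box (c : R * R) (d : R) (q : R * R) : Prop :=
  Rabs (fst q - fst c) < d /\ Rabs (snd q - snd c) < d.

Lemma box_center c d : 0 < d -> box c d c.
Proof. intros Hd. unfold box. rewrite !Rminus_diag, Rabs_R0. lra. Qed.

Lemma box_le c d d' q : d <= d' -> box c d q -> box c d' q.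
Proof. unfold box. lra. Qed.

Lemma vnorm_lt_of_box c d q : box c d q -> vnorm (vsub q c) < 2 * d.
Proof.
  intros [H1 H2]. eapply Rle_lt_trans. apply vnorm_le_Rabs_sum. simpl. lra.
Qed.

Lemma box_of_vnorm_lt c d q : vnorm (vsub q c) < d -> box c d q.
Proof.
  intros H. pose proof (Rabs_fst_le_vnorm (vsub q c)).
  pose proof (Rabs_snd_le_vnorm (vsub q c)). split; simpl in *; lra.
Qed.

Lemma box_translate c d e q v : box c d q -> vnorm v <= e -> box c (d + e) (vadd q v).
Proof.
  intros [H1 H2] Hv.
  pose proof (Rabs_fst_le_vnorm v); pose proof (Rabs_snd_le_vnorm v).
  pose proof (Rabs_triang (fst q - fst c) (fst v)).
  pose proof (Rabs_triang (snd q - snd c) (snd v)).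
  split; simpl; [replace (fst q + fst v - fst c) with (fst q - fst c + fst v) by ring
                | replace (snd q + snd v - snd c) with (snd q - snd c + snd v) by ring]; lra.
Qed.

Lemma box_reflect c d q : box c d q -> box c d (vsub (vscal 2 c) q).
Proof.
  intros [H1 H2]. split; simpl;
  [replace (2 * fst c - fst q - fst c) with (- (fst q - fst c)) by ring
  |replace (2 * snd c - snd q - snd c) with (- (snd q - snd c)) by ring];
  rewrite Rabs_Ropp; assumption.
Qed.

Lemma box_between c d x y z :
  box c d x -> box c d y ->
  Rmin (fst y) (fst x) <= fst z <= Rmax (fst y) (fst x) ->
  Rmin (snd y) (snd x) <= snd z <= Rmax (snd y) (snd x) -> box c d z.
Proof.
  unfold box, Rmin, Rmax. intros [X1 X2] [Y1 Y2].
  apply Rabs_def2 in X1, X2, Y1, Y2.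
  destruct (Rle_dec (fst y) (fst x)), (Rle_dec (snd y) (snd x));
  intros; split; apply Rabs_def1; lra.
Qed.

Lemma locally_box c (P : R * R -> Prop) :
  locally c P -> exists d, 0 < d /\ forall q, box c d q -> P q.
Proof.
  intros [d Hd]. exists d. split; [apply cond_pos|].
  intros q [H1 H2]. apply Hd. split; assumption.
Qed.

Lemma box_locally_fst c d q : box c d q -> locally (fst q) (fun t => box c d (t, snd q)).
Proof.
  intros [H1 H2].
  assert (He : 0 < d - Rabs (fst q - fst c)) by lra.
  exists (mkposreal _ He). intros t Ht.
  change (Rabs (t - fst q) < d - Rabs (fst q - fst c)) in Ht.
  split; simpl; [|assumption].
  replace (t - fst c) with (t - fst q + (fst q - fst c)) by ring.
  pose proof (Rabs_triang (t - fst q) (fst q - fst c)). lra.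
Qed.

Lemma box_locally_snd c d q : box c d q -> locally (snd q) (fun t => box c d (fst q, t)).
Proof.
  intros [H1 H2].
  assert (He : 0 < d - Rabs (snd q - snd c)) by lra.
  exists (mkposreal _ He). intros t Ht.
  change (Rabs (t - snd q) < d - Rabs (snd q - snd c)) in Ht.
  split; simpl; [assumption|].
  replace (t - snd c) with (t - snd q + (snd q - snd c)) by ring.
  pose proof (Rabs_triang (t - snd q) (snd q - snd c)). lra.
Qed.

Lemma continuous_locally_close (f : R * R -> R) c eps :
  continuous f c -> 0 < eps -> locally c (fun q => Rabs (f q - f c) < eps).
Proof.
  intros Hf He. exact (proj1 (filterlim_locally f (f c)) Hf (mkposreal eps He)).
Qed.

Lemma MVT_Derive (f : R -> R) a b : (forall t, ex_derive f t) ->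
  exists c, Rmin a b <= c <= Rmax a b /\ f b - f a = Derive f c * (b - a).
Proof.
  intros Hf.
  destruct (MVT_gen f a b (Derive f)) as [c Hc].
  - intros t _. apply Derive_correct, Hf.
  - intros t _. apply continuity_pt_filterlim.
    apply (ex_derive_continuous (K := R_AbsRing) (V := R_NormedModule)), Hf.
  - exists c. exact Hc.
Qed.

Lemma Derive_comp_reflect (G : R -> R) c x : ex_derive G (c - x) ->
  Derive (fun t => G (c - t)) x = - Derive G (c - x).
Proof.
  intros HG. rewrite (Derive_comp G (fun t => c - t)) by (auto; auto_derive; auto).
  replace (Derive (fun t => c - t) x) with (-1)
    by (symmetry; apply is_derive_unique; auto_derive; auto).
  ring.
Qed.

Definition has_partials (g : R * R -> R) : Prop :=
  forall z, ex_derive (fun t => g (t, snd z)) (fst z) /\ ex_derive (fun t => g (fst z, t)) (snd z).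

Lemma increment_by_partials (g : R * R -> R) x y : has_partials g ->
  exists z1 z2, (forall c d, box c d x -> box c d y -> box c d z1 /\ box c d z2) /\
    g x - g y = Defs.d1 g z1 * (fst x - fst y) + Defs.d2 g z2 * (snd x - snd y).
Proof.
  intros Hg. destruct x as [x1 x2], y as [y1 y2]; simpl.
  destruct (MVT_Derive (fun t => g (t, x2)) y1 x1) as [c1 [Hc1 E1]].
  { intros t. exact (proj1 (Hg (t, x2))). }
  destruct (MVT_Derive (fun t => g (y1, t)) y2 x2) as [c2 [Hc2 E2]].
  { intros t. exact (proj2 (Hg (y1, t))). }
  exists (c1, x2), (y1, c2). split.
  - intros c d Hx Hy. split; apply (box_between c d _ _ _ Hx Hy); simpl;
      auto using Rmin_l, Rmin_r, Rmax_l, Rmax_r.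
  - unfold Defs.d1, Defs.d2; simpl. lra.
Qed.

Lemma lipschitz_on_box (g : R * R -> R) c d M : has_partials g ->
  (forall z, box c d z -> Rabs (Defs.d1 g z) <= M /\ Rabs (Defs.d2 g z) <= M) ->
  forall x y, box c d x -> box c d y -> Rabs (g x - g y) <= 2 * M * vnorm (vsub x y).
Proof.
  intros Hg HM x y Hx Hy.
  destruct (increment_by_partials g x y Hg) as [z1 [z2 [Hz ->]]].
  destruct (Hz c d Hx Hy) as [Hz1 Hz2].
  pose proof (proj1 (HM z1 Hz1)); pose proof (proj2 (HM z2 Hz2)).
  pose proof (Rabs_fst_le_vnorm (vsub x y)); pose proof (Rabs_snd_le_vnorm (vsub x y)).
  pose proof (Rabs_pos (fst x - fst y)); pose proof (Rabs_pos (snd x - snd y)).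
  simpl in *.
  eapply Rle_trans; [apply Rabs_triang|]. rewrite !Rabs_mult.
  pose proof (Rabs_pos (Defs.d1 g z1)); pose proof (Rabs_pos (Defs.d2 g z2)). nra.
Qed.

Lemma locally_bounded_list (fs : list (R * R -> R)) c :
  (forall f, In f fs -> continuous f c) ->
  exists M, locally c (fun q => forall f, In f fs -> Rabs (f q) <= M).
Proof.
  induction fs as [|f fs IH]; intros Hc.
  - exists 0. apply filter_forall. intros q g [].
  - destruct IH as [M HM]; [intros g Hg; apply Hc; right; exact Hg|].
    exists (Rmax M (Rabs (f c) + 1)).
    generalize (filter_and _ _ HM
      (continuous_locally_close f c 1 (Hc f (or_introl eq_refl)) Rlt_0_1)).
    apply filter_imp. intros q [Hq Hf] g [<-|Hg].
    + pose proof (Rabs_triang_inv (f q) (f c)). pose proof (Rmax_r M (Rabs (f c) + 1)). lra.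
    + pose proof (Hq g Hg). pose proof (Rmax_l M (Rabs (f c) + 1)). lra.
Qed.

Lemma Rabs_quad_form_le A B1 B2 C eps x y :
  Rabs A <= eps -> Rabs B1 <= eps -> Rabs B2 <= eps -> Rabs C <= eps ->
  Rabs (A * x * x + (B1 + B2) * x * y + C * y * y) <= 2 * eps * (x * x + y * y).
Proof.
  intros HA HB1 HB2 HC.
  assert (Ex : Rabs x * Rabs x = x * x) by (rewrite <- Rabs_mult; apply Rabs_pos_eq; nra).
  assert (Ey : Rabs y * Rabs y = y * y) by (rewrite <- Rabs_mult; apply Rabs_pos_eq; nra).
  pose proof (Rabs_pos x); pose proof (Rabs_pos y); pose proof (Rabs_pos A).
  pose proof (Rabs_triang B1 B2).
  assert (Hxy : 2 * (Rabs x * Rabs y) <= x * x + y * y)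
    by (pose proof (Rle_0_sqr (Rabs x - Rabs y)); unfold Rsqr in *; nra).
  assert (T1 : Rabs A * (Rabs x * Rabs x) <= eps * (x * x))
    by (rewrite Ex; apply Rmult_le_compat_r; nra).
  assert (T2 : Rabs (B1 + B2) * (Rabs x * Rabs y) <= eps * (x * x + y * y)).
  { apply (Rle_trans _ (eps * (2 * (Rabs x * Rabs y)))).
    - replace (eps * (2 * (Rabs x * Rabs y))) with (2 * eps * (Rabs x * Rabs y)) by ring.
      apply Rmult_le_compat_r; [nra | lra].
    - apply Rmult_le_compat_l; lra. }
  assert (T3 : Rabs C * (Rabs y * Rabs y) <= eps * (y * y))
    by (rewrite Ey; apply Rmult_le_compat_r; nra).
  eapply Rle_trans; [apply Rabs_triang|].
  eapply Rle_trans; [apply Rplus_le_compat_r, Rabs_triang|].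
  rewrite !Rabs_mult. lra.
Qed.

Lemma quad_form_coercive A B C :
  (forall x y, (x, y) <> (0, 0) -> 0 < A * x * x + B * x * y + C * y * y) ->
  exists mu, 0 < mu /\ forall x y, mu * (x * x + y * y) <= A * x * x + B * x * y + C * y * y.
Proof.
  intros H.
  assert (HA : 0 < A) by (specialize (H 1 0); assert ((1, 0) <> (0, 0)) as Hne
    by (intro E; injection E; lra); specialize (H Hne); lra).
  assert (HC : 0 < C) by (specialize (H 0 1); assert ((0, 1) <> (0, 0)) as Hne
    by (intro E; injection E; lra); specialize (H Hne); lra).
  assert (HD : 0 < 4 * A * C - B * B).
  { assert (Hne : (- B, 2 * A) <> (0, 0)) by (intro E; injection E; lra).
    specialize (H _ _ Hne). nra. }
  exists ((4 * A * C - B * B) / (4 * (A + C))). split.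
  - apply Rdiv_lt_0_compat; lra.
  - intros x y. apply (Rmult_le_reg_l (4 * (A + C))); [lra|].
    replace (4 * (A + C) * ((4 * A * C - B * B) / (4 * (A + C)) * (x * x + y * y)))
      with ((4 * A * C - B * B) * (x * x + y * y)) by (field; lra).
    (* 4 (A + C) (A x^2 + B x y + C y^2) - (4 A C - B^2) (x^2 + y^2)
       = (2 A x + B y)^2 + (B x + 2 C y)^2 *)
    pose proof (Rle_0_sqr (2 * A * x + B * y)); pose proof (Rle_0_sqr (B * x + 2 * C * y)).
    unfold Rsqr in *. nra.
Qed.

Lemma continuous_bounded_below_off_box (h : R * R -> R) c r d :
  0 < d -> (forall q, continuous h q) -> (forall q, q <> c -> 0 < h q) ->
  exists m, 0 < m /\ forall p, box c r p -> ~ box c d p -> m <= h p.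
Proof.
  intros Hd Hh Hpos.
  (* A good box around [c] lies in [box c d]; on a good box around any other point, [h] is at
     least its radius.  A Lebesgue number [m] of the cover of the closed square by good boxes
     is then a lower bound for [h] outside [box c d]. *)
  set (Good := fun u v (D : posreal) =>
    ((u, v) = c /\ D <= d) \/
    (D <= h (u, v) / 2 /\ forall q, box (u, v) D q -> h (u, v) / 2 <= h q)).
  assert (Hex : forall u v, exists D : posreal, Good u v D).
  { intros u v. destruct (classic ((u, v) = c)) as [E|E].
    - exists (mkposreal d Hd). left. split; [exact E | simpl; lra].
    - pose proof (Hpos _ E) as Hh0.
      destruct (locally_box _ _ (continuous_locally_close h (u, v) (h (u, v) / 2) (Hh _)
        ltac:(lra))) as [e [He Hclose]].
      assert (HD : 0 < Rmin e (h (u, v) / 2)) by (apply Rmin_pos; lra).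
      exists (mkposreal _ HD). right. simpl. split; [apply Rmin_r|].
      intros q Hq. specialize (Hclose q (box_le _ _ _ _ (Rmin_l _ _) Hq)).
      apply Rabs_def2 in Hclose. lra. }
  set (delta := fun u v => proj1_sig (constructive_indefinite_description _ (Hex u v))).
  assert (Hdelta : forall u v, Good u v (delta u v))
    by (intros u v; exact (proj2_sig (constructive_indefinite_description _ (Hex u v)))).
  destruct (compactness_value_2d (fst c - r) (fst c + r) (snd c - r) (snd c + r) delta)
    as [m Hm].
  exists m. split; [apply cond_pos|].
  intros [p1 p2] [Hp1 Hp2] Hout. apply Rnot_lt_le. intros Hlt.
  apply Rabs_def2 in Hp1, Hp2. simpl in *.
  apply (Hm p1 p2); [lra | lra |].
  intros [u [v [_ [_ [Hx [Hy Hmd]]]]]].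
  destruct (Hdelta u v) as [[E Hle] | [Hle Hq]].
  - subst c. apply Hout. split; simpl; lra.
  - pose proof (Hq (p1, p2) (conj Hx Hy)). lra.
Qed.

Definition hess_form (f : R * R -> R) (q o : R * R) : R := dot (hess_apply f q o) o.

Definition hess_form_odd_diff (f : R * R -> R) (p o : R * R) (t : R) : R :=
  hess_form f (vadd p (vscal t o)) o - hess_form f (vadd p (vscal (- t) o)) o.

Lemma hess_form_expand f q o : hess_form f q o =
  Dl (true :: true :: nil) f q * (fst o * fst o) +
  Dl (true :: false :: nil) f q * (fst o * snd o) +
  Dl (false :: true :: nil) f q * (snd o * fst o) +
  Dl (false :: false :: nil) f q * (snd o * snd o).
Proof. unfold hess_form, hess_apply, dot; simpl. ring. Qed.

Lemma Rabs_hess_form_le_opnorm f q o (M : R) : vnorm o = 1 ->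
  Rbar_le (hess_opnorm f q) M -> Rabs (hess_form f q o) <= M.
Proof.
  intros Ho HM. eapply Rle_trans; [apply Rabs_dot_le|]. rewrite Ho, Rmult_1_r.
  refine (Rbar_le_trans (Finite _) _ (Finite M) _ HM).
  apply (Lub_Rbar_correct (fun r => exists v, vnorm v = 1 /\ r = vnorm (hess_apply f q v))).
  exists o. split; [exact Ho | reflexivity].
Qed.

Lemma hess_form_sub_le f x y o B : vnorm o = 1 ->
  (forall i j, Rabs (Dl (i :: j :: nil) f x - Dl (i :: j :: nil) f y) <= B) ->
  Rabs (hess_form f x o - hess_form f y o) <= 4 * B.
Proof.
  intros Ho HB. rewrite !hess_form_expand.
  destruct (Rabs_coord_le_1 o Ho) as [Ho1 Ho2].
  assert (Hterm : forall i j u v, Rabs u <= 1 -> Rabs v <= 1 ->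
    Rabs ((Dl (i :: j :: nil) f x - Dl (i :: j :: nil) f y) * (u * v)) <= B).
  { intros i j u v Hu Hv. rewrite !Rabs_mult.
    pose proof (HB i j). pose proof (Rabs_pos u); pose proof (Rabs_pos v).
    pose proof (Rabs_pos (Dl (i :: j :: nil) f x - Dl (i :: j :: nil) f y)).
    assert (0 <= Rabs u * Rabs v <= 1) by (split; nra). nra. }
  pose proof (Hterm true true _ _ Ho1 Ho1); pose proof (Hterm true false _ _ Ho1 Ho2).
  pose proof (Hterm false true _ _ Ho2 Ho1); pose proof (Hterm false false _ _ Ho2 Ho2).
  match goal with |- Rabs ?e <= _ => replace e with
    ((Dl (true :: true :: nil) f x - Dl (true :: true :: nil) f y) * (fst o * fst o) +
     (Dl (true :: false :: nil) f x - Dl (true :: false :: nil) f y) * (fst o * snd o) +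
     (Dl (false :: true :: nil) f x - Dl (false :: true :: nil) f y) * (snd o * fst o) +
     (Dl (false :: false :: nil) f x - Dl (false :: false :: nil) f y) * (snd o * snd o))
    by ring end.
  eapply Rle_trans; [apply Rabs_triang|].
  eapply Rle_trans; [apply Rplus_le_compat_r, Rabs_triang|].
  eapply Rle_trans; [apply Rplus_le_compat_r, Rplus_le_compat_r, Rabs_triang|].
  lra.
Qed.

Section SmoothFunction.

Variable psi : R * R -> R.
Hypothesis psi_smooth : smooth psi.

Lemma Dl_has_partials l : has_partials (Dl l psi).
Proof. exact (proj1 (psi_smooth l)). Qed.

Lemma Dl_continuous l q : continuous (Dl l psi) q.
Proof. exact (proj2 (psi_smooth l) q). Qed.

Lemma hess_form_lipschitz_near c : exists d K, 0 < d /\ 0 <= K /\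
  forall o x y, vnorm o = 1 -> box c d x -> box c d y ->
    Rabs (hess_form psi x o - hess_form psi y o) <= K * vnorm (vsub x y).
Proof.
  set (thirds := map (fun l => Dl l psi)
    ((true :: true :: true :: nil) :: (true :: true :: false :: nil) ::
     (true :: false :: true :: nil) :: (true :: false :: false :: nil) ::
     (false :: true :: true :: nil) :: (false :: true :: false :: nil) ::
     (false :: false :: true :: nil) :: (false :: false :: false :: nil) :: nil)).
  assert (Hin : forall b i j, In (Dl (b :: i :: j :: nil) psi) thirds)
    by (intros [] [] []; simpl; tauto).
  destruct (locally_bounded_list thirds c) as [M HM].
  { intros f Hf. apply in_map_iff in Hf. destruct Hf as [l [<- _]]. apply Dl_continuous. }
  destruct (locally_box _ _ HM) as [d [Hd Hbound]].
  assert (HM0 : 0 <= M).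
  { pose proof (Hbound c (box_center c d Hd) _ (Hin true true true)).
    pose proof (Rabs_pos (Dl (true :: true :: true :: nil) psi c)). lra. }
  exists d, (8 * M). split; [exact Hd|]. split; [lra|].
  intros o x y Ho Hx Hy.
  replace (8 * M * vnorm (vsub x y)) with (4 * (2 * M * vnorm (vsub x y))) by ring.
  apply hess_form_sub_le; [exact Ho|]. intros i j.
  apply (lipschitz_on_box _ c d); [apply Dl_has_partials | | exact Hx | exact Hy].
  intros z Hz.
  split; [exact (Hbound z Hz _ (Hin true i j)) | exact (Hbound z Hz _ (Hin false i j))].
Qed.

Lemma vnorm_grad_continuous q : continuous (fun q => vnorm (grad psi q)) q.
Proof.
  apply (continuous_comp (fun q => dot (grad psi q) (grad psi q)) sqrt); [|apply continuous_sqrt].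
  apply (continuous_plus (V := R_NormedModule)
    (fun q => Defs.d1 psi q * Defs.d1 psi q) (fun q => Defs.d2 psi q * Defs.d2 psi q));
  apply (continuous_mult (K := R_AbsRing));
  first [exact (Dl_continuous (true :: nil) q) | exact (Dl_continuous (false :: nil) q)].
Qed.

Lemma Dl2_locally_close c eps : 0 < eps -> locally c (fun q => forall i j,
  Rabs (Dl (i :: j :: nil) psi q - Dl (i :: j :: nil) psi c) < eps).
Proof.
  intros He.
  assert (Hij : forall i j, locally c (fun q =>
    Rabs (Dl (i :: j :: nil) psi q - Dl (i :: j :: nil) psi c) < eps))
    by (intros i j; apply continuous_locally_close; [apply Dl_continuous | exact He]).
  generalize (filter_and _ _ (filter_and _ _ (Hij true true) (Hij true false))
                             (filter_and _ _ (Hij false true) (Hij false false))).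
  apply filter_imp. intros q [[H11 H12] [H21 H22]] [] []; assumption.
Qed.

Lemma grad_ge_dist_near_nondegenerate c :
  grad psi c = (0, 0) -> (forall v, v <> (0, 0) -> hess_form psi c v < 0) ->
  exists d mu, 0 < d /\ 0 < mu /\
    forall p, box c d p -> mu * vnorm (vsub p c) <= vnorm (grad psi p).
Proof.
  intros Hcrit Hneg. injection Hcrit as Hc1 Hc2.
  set (D := fun i j => Dl (i :: j :: nil) psi).
  destruct (quad_form_coercive (- D true true c) (- (D true false c + D false true c))
    (- D false false c)) as [mu [Hmu Hcoer]].
  { intros x y Hxy. pose proof (Hneg _ Hxy) as Hn.
    rewrite hess_form_expand in Hn. cbn [fst snd] in Hn. unfold D. lra. }
  destruct (locally_box _ _ (Dl2_locally_close c (mu / 4) ltac:(lra))) as [d [Hd Hclose]].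
  exists d, (mu / 2). split; [exact Hd|]. split; [lra|].
  intros p Hp.
  destruct (increment_by_partials (Dl (true :: nil) psi) p c (Dl_has_partials _))
    as [z1 [z2 [Hz12 E1]]].
  destruct (increment_by_partials (Dl (false :: nil) psi) p c (Dl_has_partials _))
    as [z3 [z4 [Hz34 E2]]].
  destruct (Hz12 c d Hp (box_center c d Hd)) as [Hz1 Hz2].
  destruct (Hz34 c d Hp (box_center c d Hd)) as [Hz3 Hz4].
  change (Defs.d1 psi p - Defs.d1 psi c = D true true z1 * (fst p - fst c) +
    D false true z2 * (snd p - snd c)) in E1.
  change (Defs.d2 psi p - Defs.d2 psi c = D true false z3 * (fst p - fst c) +
    D false false z4 * (snd p - snd c)) in E2.
  rewrite Hc1, Rminus_0_r in E1. rewrite Hc2, Rminus_0_r in E2.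
  pose proof (Hcoer (fst p - fst c) (snd p - snd c)).
  pose proof (Rabs_quad_form_le (D true true z1 - D true true c) (D true false z3 - D true false c)
    (D false true z2 - D false true c) (D false false z4 - D false false c) (mu / 4)
    (fst p - fst c) (snd p - snd c) (Rlt_le _ _ (Hclose z1 Hz1 true true))
    (Rlt_le _ _ (Hclose z3 Hz3 true false)) (Rlt_le _ _ (Hclose z2 Hz2 false true))
    (Rlt_le _ _ (Hclose z4 Hz4 false false))) as Herr.
  apply Rabs_le_between in Herr.
  apply vnorm_ge_of_neg_dot_ge. rewrite vnorm_sqr.
  unfold dot, grad, vsub; cbn [fst snd]. rewrite E1, E2. lra.
Qed.

Section Reflection.

Variables (ps : R * R) (r : R).
Hypothesis r_pos : 0 < r.
Hypothesis psi_even : forall v, vnorm v <= r -> psi (vadd ps v) = psi (vsub ps v).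
Hypothesis center_nondegenerate : forall v, v <> (0, 0) -> hess_form psi ps v < 0.

Lemma Dl_reflect l q : box ps (r / 2) q ->
  Dl l psi q = (-1) ^ length l * Dl l psi (vsub (vscal 2 ps) q).
Proof.
  revert q. induction l as [|b l IH]; intros q Hq.
  - cbn [Dl length pow]. rewrite Rmult_1_l.
    pose proof (vnorm_lt_of_box _ _ _ Hq).
    replace q with (vadd ps (vsub q ps)) at 1
      by (destruct q, ps; unfold vadd, vsub; simpl; f_equal; ring).
    replace (vsub (vscal 2 ps) q) with (vsub ps (vsub q ps))
      by (destruct q, ps; unfold vscal, vsub; simpl; f_equal; ring).
    apply psi_even. lra.
  - destruct b; cbn [Dl pd length pow].
    + unfold Defs.d1.
      rewrite (Derive_ext_loc _
        (fun t => (-1) ^ length l * Dl l psi (2 * fst ps - t, 2 * snd ps - snd q))).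
      2: exact (filter_imp _ _ (fun t Ht => IH (t, snd q) Ht) (box_locally_fst _ _ _ Hq)).
      rewrite Derive_scal, (Derive_comp_reflect (fun t => Dl l psi (t, 2 * snd ps - snd q)))
        by exact (proj1 (Dl_has_partials l (2 * fst ps - fst q, 2 * snd ps - snd q))).
      simpl. ring.
    + unfold Defs.d2.
      rewrite (Derive_ext_loc _
        (fun t => (-1) ^ length l * Dl l psi (2 * fst ps - fst q, 2 * snd ps - t))).
      2: exact (filter_imp _ _ (fun t Ht => IH (fst q, t) Ht) (box_locally_snd _ _ _ Hq)).
      rewrite Derive_scal, (Derive_comp_reflect (fun t => Dl l psi (2 * fst ps - fst q, t)))
        by exact (proj2 (Dl_has_partials l (2 * fst ps - fst q, 2 * snd ps - snd q))).
      simpl. ring.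
Qed.

Lemma grad_center_eq_0 : grad psi ps = (0, 0).
Proof.
  assert (Hps : box ps (r / 2) ps) by (apply box_center; lra).
  assert (E : vsub (vscal 2 ps) ps = ps) by (destruct ps; unfold vscal, vsub; simpl; f_equal; ring).
  pose proof (Dl_reflect (true :: nil) ps Hps) as H1.
  pose proof (Dl_reflect (false :: nil) ps Hps) as H2.
  rewrite E in H1, H2. cbn [Dl pd length pow] in H1, H2.
  unfold grad. f_equal; lra.
Qed.

Lemma hess_form_reflect q o : box ps (r / 2) q ->
  hess_form psi q o = hess_form psi (vsub (vscal 2 ps) q) o.
Proof.
  intros Hq. rewrite (hess_form_expand psi q).
  rewrite (Dl_reflect (true :: true :: nil) q Hq), (Dl_reflect (true :: false :: nil) q Hq),
    (Dl_reflect (false :: true :: nil) q Hq), (Dl_reflect (false :: false :: nil) q Hq).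
  rewrite hess_form_expand. cbn [length pow]. ring.
Qed.

Lemma hess_form_odd_diff_near_center : exists d K, 0 < d /\ 0 <= K /\
  forall p o t, vnorm o = 1 -> box ps d p -> Rabs t <= d ->
    Rabs (hess_form_odd_diff psi p o t) <= K * vnorm (grad psi p).
Proof.
  destruct (hess_form_lipschitz_near ps) as [dL [K [HdL [HK Hlip]]]].
  destruct (grad_ge_dist_near_nondegenerate ps grad_center_eq_0 center_nondegenerate)
    as [dg [mu [Hdg [Hmu Hgrad]]]].
  assert (Hradius : exists d, 0 < d /\ 2 * d <= r / 2 /\ 2 * d <= dL /\ 2 * d <= dg).
  { exists (Rmin (r / 2) (Rmin dL dg) / 2).
    pose proof (Rmin_l (r / 2) (Rmin dL dg)); pose proof (Rmin_r (r / 2) (Rmin dL dg)).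
    pose proof (Rmin_l dL dg); pose proof (Rmin_r dL dg).
    assert (0 < Rmin (r / 2) (Rmin dL dg)) by (repeat apply Rmin_pos; lra).
    repeat split; lra. }
  destruct Hradius as [d [Hd [Hdr [HdL' Hdg']]]].
  exists d, (2 * K / mu). split; [exact Hd|]. split; [apply Rdiv_le_0_compat; lra|].
  intros p o t Ho Hp Ht.
  assert (Hshift : forall s, Rabs s <= d -> box ps (2 * d) (vadd p (vscal s o))).
  { intros s Hs. replace (2 * d) with (d + d) by ring. apply box_translate; [exact Hp|].
    rewrite vnorm_vscal, Ho. lra. }
  assert (Hrefl : box ps (2 * d) (vadd (vsub (vscal 2 ps) p) (vscal t o))).
  { replace (2 * d) with (d + d) by ring. apply box_translate; [apply box_reflect, Hp|].
    rewrite vnorm_vscal, Ho. lra. }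
  assert (Htm : Rabs (- t) <= d) by (rewrite Rabs_Ropp; exact Ht).
  unfold hess_form_odd_diff.
  (* evenness of the Hessian about [ps] trades [p - t o] for its mirror image [2 ps - p + t o] *)
  rewrite (hess_form_reflect (vadd p (vscal (- t) o)) o)
    by exact (box_le _ _ _ _ Hdr (Hshift _ Htm)).
  replace (vsub (vscal 2 ps) (vadd p (vscal (- t) o))) with (vadd (vsub (vscal 2 ps) p) (vscal t o))
    by (unfold vsub, vscal, vadd; simpl; f_equal; ring).
  eapply Rle_trans.
  { apply Hlip; [exact Ho | exact (box_le _ _ _ _ HdL' (Hshift _ Ht))
                | exact (box_le _ _ _ _ HdL' Hrefl)]. }
  replace (vsub (vadd p (vscal t o)) (vadd (vsub (vscal 2 ps) p) (vscal t o)))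
    with (vscal 2 (vsub p ps)) by (unfold vsub, vscal, vadd; simpl; f_equal; ring).
  rewrite vnorm_vscal, Rabs_pos_eq by lra.
  pose proof (Hgrad p (box_le ps d dg p ltac:(lra) Hp)).
  apply (Rmult_le_reg_l mu); [exact Hmu|].
  replace (mu * (2 * K / mu * vnorm (grad psi p))) with (2 * K * vnorm (grad psi p))
    by (field; lra).
  nra.
Qed.

End Reflection.
End SmoothFunction.

Lemma hess_form_odd_diff_le_grad psi ps : smooth psi -> conditions psi ps ->
  exists T kappa, 0 < T /\ 0 < kappa /\ forall p o t, vnorm o = 1 -> Rabs t <= T ->
    Rabs (hess_form_odd_diff psi p o t) <= kappa * vnorm (grad psi p).
Proof.
  intros Hs [_ [Hneg [[r1 [Hr1 Heven]] [[c1 [Hc1 Hopn]] [Hcrit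
    [_ [c2 [r2 [r3 [Hc2 [Hr2 [Hr3 Hfar]]]]]]]]]]]].
  destruct (hess_form_odd_diff_near_center psi Hs ps r1 Hr1 Heven Hneg)
    as [d [K [Hd [HK Hnear]]]].
  destruct (continuous_bounded_below_off_box (fun q => vnorm (grad psi q)) ps r2 d Hd
    (vnorm_grad_continuous psi Hs) (fun q Hq => vnorm_pos _ (Hcrit q Hq))) as [m [Hm Hmid]].
  exists (Rmin r3 d), (K + 2 * c1 / m + 2 * c2).
  assert (Hc1m : 0 <= 2 * c1 / m) by (apply Rdiv_le_0_compat; lra).
  split; [apply Rmin_pos; lra|]. split; [lra|].
  intros p o t Ho Ht.
  pose proof (Rmin_l r3 d); pose proof (Rmin_r r3 d).
  pose proof (vnorm_ge_0 (grad psi p)).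
  assert (Hsplit : Rabs (hess_form_odd_diff psi p o t) <=
    Rabs (hess_form psi (vadd p (vscal t o)) o) + Rabs (hess_form psi (vadd p (vscal (- t) o)) o)).
  { unfold hess_form_odd_diff, Rminus.
    rewrite <- (Rabs_Ropp (hess_form psi (vadd p (vscal (- t) o)) o)).
    apply Rabs_triang. }
  destruct (classic (box ps d p)) as [Hp|Hp].
  - pose proof (Hnear p o t Ho Hp ltac:(lra)). nra.
  - destruct (Rlt_or_le (vnorm (vsub p ps)) r2) as [Hin|Hout].
    + pose proof (Hmid p (box_of_vnorm_lt _ _ _ Hin) Hp).
      pose proof (Rabs_hess_form_le_opnorm psi (vadd p (vscal t o)) o c1 Ho (Hopn _)).
      pose proof (Rabs_hess_form_le_opnorm psi (vadd p (vscal (- t) o)) o c1 Ho (Hopn _)).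
      assert (2 * c1 <= 2 * c1 / m * vnorm (grad psi p)).
      { replace (2 * c1) with (2 * c1 / m * m) at 1 by (field; lra).
        apply Rmult_le_compat_l; assumption. }
      nra.
    + assert (Hshift : forall s, Rabs s <= r3 -> vnorm (vscal s o) <= r3)
        by (intros s Hs'; rewrite vnorm_vscal, Ho; lra).
      pose proof (Rabs_hess_form_le_opnorm psi _ o _ Ho
        (Hfar p (vscal t o) (Rle_ge _ _ Hout) (Hshift t ltac:(lra)))).
      pose proof (Rabs_hess_form_le_opnorm psi _ o _ Ho
        (Hfar p (vscal (- t) o) (Rle_ge _ _ Hout) (Hshift (- t) ltac:(rewrite Rabs_Ropp; lra)))).
      nra.
Qed.

Lemma continuity_2d_pt_of_continuous (h : R * R -> R) x y : continuous h (x, y) ->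
  continuity_2d_pt (fun a b => h (a, b)) x y.
Proof.
  intros Hh eps.
  destruct (locally_box _ _ (continuous_locally_close h (x, y) eps Hh (cond_pos eps)))
    as [d [Hd Hclose]].
  exists (mkposreal d Hd). intros u v Hu Hv. exact (Hclose (u, v) (conj Hu Hv)).
Qed.

Lemma continuity_2d_pt_comp (G : R -> R -> R) (u v : R -> R -> R) x y :
  continuity_2d_pt G (u x y) (v x y) -> continuity_2d_pt u x y -> continuity_2d_pt v x y ->
  continuity_2d_pt (fun a b => G (u a b) (v a b)) x y.
Proof.
  intros HG Hu Hv eps. destruct (HG eps) as [d Hd].
  destruct (Hu d) as [du Hdu], (Hv d) as [dv Hdv].
  assert (Hm : 0 < Rmin du dv) by (apply Rmin_pos; apply cond_pos).
  exists (mkposreal _ Hm). simpl. intros a b Ha Hb.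
  pose proof (Rmin_l du dv); pose proof (Rmin_r du dv).
  apply Hd; [apply Hdu | apply Hdv]; lra.
Qed.

Lemma continuity_2d_pt_pow (f : R -> R -> R) n x y : continuity_2d_pt f x y ->
  continuity_2d_pt (fun a b => f a b ^ n) x y.
Proof.
  intros Hf. induction n as [|n IH].
  - apply (continuity_2d_pt_ext (fun _ _ => 1)); [reflexivity | apply continuity_2d_pt_const].
  - exact (continuity_2d_pt_mult _ _ x y Hf IH).
Qed.

Lemma continuity_2d_pt_sin_scal k x y : continuity_2d_pt (fun a _ => sin (k * a)) x y.
Proof.
  apply (continuity_1d_2d_pt_comp sin (fun a _ => k * a)); [apply continuity_sin|].
  apply continuity_2d_pt_mult; [apply continuity_2d_pt_const | apply continuity_2d_pt_id1].
Qed.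

Lemma ex_RInt_of_continuity_2d (g : R -> R -> R) t a b :
  (forall x y, continuity_2d_pt g x y) -> ex_RInt (g t) a b.
Proof.
  intros Hg. apply (ex_RInt_continuous (V := R_CompleteNormedModule)). intros s _.
  apply filterlim_locally. intros eps. destruct (Hg t s eps) as [d Hd].
  exists d. intros s' Hs'. apply Hd; [rewrite Rminus_diag, Rabs_R0; apply cond_pos | exact Hs'].
Qed.

Lemma abs_RInt_sub_le (f g : R -> R) a b M : a <= b -> ex_RInt f a b -> ex_RInt g a b ->
  (forall t, a <= t <= b -> Rabs (f t - g t) <= M) ->
  Rabs (RInt f a b - RInt g a b) <= (b - a) * M.
Proof.
  intros Hab Hf Hg HM.
  change (RInt f a b - RInt g a b) with (minus (RInt f a b) (RInt g a b)).
  rewrite <- (RInt_minus (V := R_CompleteNormedModule) f g a b Hf Hg).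
  apply abs_RInt_le_const; [exact Hab | | exact HM].
  exact (ex_RInt_minus (V := R_NormedModule) f g a b Hf Hg).
Qed.

Lemma RInt_param_continuous (g : R -> R -> R) a b : a <= b ->
  (forall x y, continuity_2d_pt g x y) -> forall t0, continuous (fun t => RInt (g t) a b) t0.
Proof.
  intros Hab Hg t0. apply filterlim_locally. intros eps.
  assert (He : 0 < eps / (b - a + 1)) by (apply Rdiv_lt_0_compat; [apply cond_pos | lra]).
  destruct (uniform_continuity_2d g (t0 - 1) (t0 + 1) a b (fun x y _ _ => Hg x y)
    (mkposreal _ He)) as [d Hd].
  assert (Hm : 0 < Rmin d 1) by (apply Rmin_pos; [apply cond_pos | lra]).
  exists (mkposreal _ Hm). intros t Ht.
  change (Rabs (t - t0) < Rmin d 1) in Ht.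
  change (Rabs (RInt (g t) a b - RInt (g t0) a b) < eps).
  pose proof (Rmin_l d 1); pose proof (Rmin_r d 1). destruct (Rabs_def2 _ _ Ht).
  eapply Rle_lt_trans.
  { apply (abs_RInt_sub_le _ _ a b (eps / (b - a + 1))); try apply ex_RInt_of_continuity_2d; auto.
    intros s Hs. apply Rlt_le, (Hd t0 s t s); try lra.
    rewrite Rminus_diag, Rabs_R0. apply cond_pos. }
  pose proof (cond_pos eps).
  replace ((b - a) * (eps / (b - a + 1))) with (eps * ((b - a) / (b - a + 1))) by (field; lra).
  rewrite <- (Rmult_1_r eps) at 2. apply Rmult_lt_compat_l; [lra|].
  replace ((b - a) / (b - a + 1)) with (1 - 1 / (b - a + 1)) by (field; lra).
  assert (0 < 1 / (b - a + 1)) by (apply Rdiv_lt_0_compat; lra). lra.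
Qed.

Lemma RInt_reflect (f : R -> R) a b : ex_RInt f a b ->
  RInt (fun y => f (a + b - y)) a b = RInt f a b.
Proof.
  intros Hf. apply is_RInt_unique.
  pose proof (is_RInt_swap (V := R_NormedModule) _ _ _ _ (RInt_correct f a b Hf)) as H.
  assert (H' : is_RInt f (-1 * a + (a + b)) (-1 * b + (a + b)) (opp (RInt f a b)))
    by (replace (-1 * a + (a + b)) with b by ring; replace (-1 * b + (a + b)) with a by ring;
        exact H).
  apply (is_RInt_comp_lin (V := R_NormedModule)),
    (is_RInt_scal (V := R_NormedModule) _ _ _ (-1)) in H'.
  replace (RInt f a b) with (scal (-1) (opp (RInt f a b)))
    by (change (-1 * - RInt f a b = RInt f a b); ring).
  eapply is_RInt_ext; [|exact H'].
  intros x _. change (-1 * (-1 * f (-1 * x + (a + b))) = f (a + b - x)).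
  replace (-1 * x + (a + b)) with (a + b - x) by ring. ring.
Qed.

Lemma sin_nat_mul_2PI_sub (w : nat) tau : sin (INR w * (2 * PI - tau)) = - sin (INR w * tau).
Proof.
  replace (INR w * (2 * PI - tau)) with (- (INR w * tau) + 2 * INR w * PI) by ring.
  rewrite sin_period, sin_neg. reflexivity.
Qed.

Lemma Rabs_weight_le alpha c s S : 0 < alpha -> 0 < c -> 0 <= s <= 1 -> Rabs S <= 1 ->
  Rabs ((1 - s) * (alpha * S) ^ 2 * (c * S)) <= alpha ^ 2 * c.
Proof.
  intros Ha Hc Hs HS.
  rewrite !Rabs_mult, <- RPow_abs, Rabs_mult, (Rabs_pos_eq (1 - s)), (Rabs_pos_eq alpha),
    (Rabs_pos_eq c) by lra.
  pose proof (Rabs_pos S). simpl.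
  assert (0 <= Rabs S * Rabs S <= 1) by (split; nra).
  assert (0 <= (1 - s) * (Rabs S * Rabs S) <= 1) by (split; nra).
  assert (0 <= alpha * alpha) by nra.
  replace ((1 - s) * (alpha * Rabs S * (alpha * Rabs S * 1)) * (c * Rabs S))
    with ((alpha * alpha * c) * (((1 - s) * (Rabs S * Rabs S)) * Rabs S)) by ring.
  replace (alpha * (alpha * 1) * c) with (alpha * alpha * c * 1) by ring.
  apply Rmult_le_compat_l; [nra|]. nra.
Qed.

Definition phi_integrand (psi : R * R -> R) (alpha c : R) (w : nat) (a : R) (p o : R * R)
  (tau s : R) : R :=
  (1 - s) * (alpha * sin (INR w * tau)) ^ 2 * (c * sin (INR w * tau)) *
  hess_form psi (vadd p (vscal (a * s * (alpha * sin (INR w * tau))) o)) o.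

Lemma phi_integrand_sub_opp psi alpha c w a p o tau s :
  phi_integrand psi alpha c w a p o tau s - phi_integrand psi alpha c w (- a) p o tau s =
  (1 - s) * (alpha * sin (INR w * tau)) ^ 2 * (c * sin (INR w * tau)) *
  hess_form_odd_diff psi p o (a * s * (alpha * sin (INR w * tau))).
Proof.
  unfold phi_integrand, hess_form_odd_diff.
  replace (- a * s * (alpha * sin (INR w * tau))) with (- (a * s * (alpha * sin (INR w * tau))))
    by ring.
  ring.
Qed.

Section PhiIntegral.

Variables (psi : R * R -> R) (alpha c : R) (w : nat) (p o : R * R).
Hypothesis psi_smooth : smooth psi.

Lemma phi_integrand_continuous a tau s :
  continuity_2d_pt (phi_integrand psi alpha c w a p o) tau s.
Proof.
  unfold phi_integrand. apply continuity_2d_pt_mult.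
  - repeat first [apply continuity_2d_pt_sin_scal | apply continuity_2d_pt_mult
      | apply continuity_2d_pt_minus | apply continuity_2d_pt_pow | apply continuity_2d_pt_const
      | apply continuity_2d_pt_id2].
  - apply (continuity_2d_pt_comp (fun x y => hess_form psi (x, y) o)
      (fun tau s => fst p + a * s * (alpha * sin (INR w * tau)) * fst o)
      (fun tau s => snd p + a * s * (alpha * sin (INR w * tau)) * snd o));
    [apply (continuity_2d_pt_ext _ _ _ _ (fun x y => eq_sym (hess_form_expand psi (x, y) o)))|..];
    repeat first [apply continuity_2d_pt_sin_scal | apply continuity_2d_pt_plus
      | apply continuity_2d_pt_mult | apply continuity_2d_pt_const | apply continuity_2d_pt_id2
      | apply (continuity_2d_pt_of_continuous (Dl _ psi)), Dl_continuous, psi_smooth].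
Qed.

Let inner a tau := RInt (phi_integrand psi alpha c w a p o tau) 0 1.

Lemma ex_RInt_inner a tau : ex_RInt (phi_integrand psi alpha c w a p o tau) 0 1.
Proof. apply ex_RInt_of_continuity_2d. intros; apply phi_integrand_continuous. Qed.

Lemma ex_RInt_outer a : ex_RInt (inner a) 0 (2 * PI).
Proof.
  apply (ex_RInt_continuous (V := R_CompleteNormedModule)). intros tau _.
  apply RInt_param_continuous; [lra | intros; apply phi_integrand_continuous].
Qed.

Lemma phi_opp a : phi psi alpha c w a p o = - phi psi alpha c w (- a) p o.
Proof.
  change (/ (2 * PI) * RInt (inner a) 0 (2 * PI) = - (/ (2 * PI) * RInt (inner (- a)) 0 (2 * PI))).
  rewrite <- (RInt_reflect (inner a) 0 (2 * PI) (ex_RInt_outer a)).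
  rewrite (RInt_ext _ (fun tau => - inner (- a) tau)).
  - replace (RInt (fun tau => - inner (- a) tau) 0 (2 * PI)) with (- RInt (inner (- a)) 0 (2 * PI))
      by (symmetry; exact (RInt_opp (V := R_CompleteNormedModule) _ _ _ (ex_RInt_outer (- a)))).
    ring.
  - intros tau _. unfold inner.
    rewrite (RInt_ext _ (fun s => - phi_integrand psi alpha c w (- a) p o tau s)).
    + exact (RInt_opp (V := R_CompleteNormedModule) _ 0 1 (ex_RInt_inner (- a) tau)).
    + intros s _. unfold phi_integrand. rewrite Rplus_0_l, sin_nat_mul_2PI_sub.
      replace (a * s * (alpha * - sin (INR w * tau))) with (- a * s * (alpha * sin (INR w * tau)))
        by ring.
      match goal with |- ?x = ?y => change (@eq R x y) end. ring.
Qed.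

Lemma phi_sub_opp_le a B :
  (forall tau s, 0 <= s <= 1 ->
    Rabs (phi_integrand psi alpha c w a p o tau s -
          phi_integrand psi alpha c w (- a) p o tau s) <= B) ->
  Rabs (phi psi alpha c w a p o - phi psi alpha c w (- a) p o) <= B.
Proof.
  intros HB. pose proof PI_RGT_0.
  change (Rabs (/ (2 * PI) * RInt (inner a) 0 (2 * PI) -
                / (2 * PI) * RInt (inner (- a)) 0 (2 * PI)) <= B).
  rewrite <- Rmult_minus_distr_l, Rabs_mult, Rabs_pos_eq
    by (apply Rlt_le, Rinv_0_lt_compat; lra).
  assert (Hout : Rabs (RInt (inner a) 0 (2 * PI) - RInt (inner (- a)) 0 (2 * PI))
    <= (2 * PI - 0) * ((1 - 0) * B)).
  { apply abs_RInt_sub_le; [lra | apply ex_RInt_outer | apply ex_RInt_outer |].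
    intros tau _. apply abs_RInt_sub_le; [lra | apply ex_RInt_inner | apply ex_RInt_inner |].
    intros s Hs. apply HB, Hs. }
  apply (Rmult_le_compat_l (/ (2 * PI))) in Hout; [|apply Rlt_le, Rinv_0_lt_compat; lra].
  replace (/ (2 * PI) * ((2 * PI - 0) * ((1 - 0) * B))) with B in Hout by (field; lra).
  exact Hout.
Qed.

Lemma Rabs_phi_le a B :
  (forall tau s, 0 <= s <= 1 ->
    Rabs (phi_integrand psi alpha c w a p o tau s -
          phi_integrand psi alpha c w (- a) p o tau s) <= B) ->
  Rabs (phi psi alpha c w a p o) <= B / 2.
Proof.
  intros HB. pose proof (phi_sub_opp_le a B HB) as H.
  rewrite (phi_opp a) in H at 1. rewrite (phi_opp a), Rabs_Ropp.
  replace (- phi psi alpha c w (- a) p o - phi psi alpha c w (- a) p o)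
    with (-2 * phi psi alpha c w (- a) p o) in H by ring.
  rewrite Rabs_mult, (Rabs_left (-2)) in H by lra. lra.
Qed.

End PhiIntegral.

Lemma Rabs_amplitude_le a s alpha S : 0 <= a -> 0 <= s <= 1 -> 0 < alpha -> Rabs S <= 1 ->
  Rabs (a * s * (alpha * S)) <= a * alpha.
Proof.
  intros Ha Hs Halpha HS.
  rewrite !Rabs_mult, (Rabs_pos_eq a), (Rabs_pos_eq s), (Rabs_pos_eq alpha) by lra.
  pose proof (Rabs_pos S).
  assert (0 <= a * s <= a) by (split; nra). assert (0 <= alpha * Rabs S <= alpha) by (split; nra).
  nra.
Qed.

Lemma Rabs_phi_integrand_sub_opp_le psi alpha c w a p o tau s T B :
  0 < alpha -> 0 < c -> 0 <= a -> a * alpha <= T -> 0 <= s <= 1 ->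
  (forall t, Rabs t <= T -> Rabs (hess_form_odd_diff psi p o t) <= B) ->
  Rabs (phi_integrand psi alpha c w a p o tau s - phi_integrand psi alpha c w (- a) p o tau s)
    <= alpha ^ 2 * c * B.
Proof.
  intros Halpha Hc Ha HaT Hs HB.
  pose proof (Rabs_le _ _ (SIN_bound (INR w * tau))) as HS.
  rewrite phi_integrand_sub_opp, Rabs_mult.
  apply Rmult_le_compat; try apply Rabs_pos.
  - apply Rabs_weight_le; assumption.
  - apply HB. pose proof (Rabs_amplitude_le a s alpha _ Ha Hs Halpha HS). lra.
Qed.

Theorem lemma3 (psi : R * R -> R) (ps : R * R)
  (Hsmooth : smooth psi) (Hcond : conditions psi ps)
  (alpha c : R) (w : nat) (Halpha : 0 < alpha) (Hc : 0 < c) :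
  exists a0 kappa : R, 0 < a0 /\ 0 < kappa /\
    forall (a : R) (p o : R * R), 0 <= a <= a0 -> vnorm o = 1 ->
      Rabs (phi psi alpha c w a p o) <= kappa * vnorm (grad psi p).
Proof.
  destruct (hess_form_odd_diff_le_grad psi ps Hsmooth Hcond) as [T [kappa [HT [Hk Hkey]]]].
  assert (Ha2 : 0 < alpha ^ 2) by (apply pow_lt; lra).
  exists (T / alpha), (alpha ^ 2 * c * kappa / 2).
  split; [apply Rdiv_lt_0_compat; lra|].
  split; [apply Rdiv_lt_0_compat; [repeat apply Rmult_lt_0_compat|]; lra|].
  intros a p o [Ha0 Ha] Ho.
  assert (HaT : a * alpha <= T).
  { replace T with (T / alpha * alpha) by (field; lra). apply Rmult_le_compat_r; lra. }
  replace (alpha ^ 2 * c * kappa / 2 * vnorm (grad psi p))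
    with (alpha ^ 2 * c * (kappa * vnorm (grad psi p)) / 2) by field.
  apply Rabs_phi_le; [exact Hsmooth|]. intros tau s Hs.
  apply (Rabs_phi_integrand_sub_opp_le _ _ _ _ _ _ _ _ _ T); try assumption.
  intros t Ht. exact (Hkey p o t Ho Ht).
Qed.
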